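(* Let $p$ be a binary word of length $l$ with $r$ runs, of which $r_1$ have size $1$. For every $n\ge0$, $$B_{n,p}(2)=\begin{cases} r_1\binom{n-r}{l-r+1} & \text{if } l\ge 2,\\[2pt] \binom{n}{2} & \text{if } l=1.\end{cases}$$
   Context: $c_p(w)$ is the number of occurrences of $p$ as a (not necessarily consecutive) subsequence of the binary word $w$; $B_{n,p}(k)$ is the number of binary words $w$ of length $n$ with $c_p(w)=k$. A run is a maximal block of consecutive equal letters; its size is its length; $r_i$ denotes the number of runs of $p$ of size $i$. Convention: $\binom{a}{b}=0$ unless $0\le b\le a$. *)

From mathcomp Require Import all_boot.
Set Implicit Arguments. Unset Strict Implicit. Unset Printing Implicit Defensive.

(* c_p(w): number of occurrences of p as a (not necessarily consecutive)
   subsequence of w, i.e. number of selections of positions (masks) of w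
   whose selected letters spell p. *)
Definition occ (p w : seq bool) : nat :=
  #|[set m : (size w).-tuple bool | mask m w == p]|.

Definition Bnp (n : nat) (p : seq bool) (k : nat) : nat :=
  #|[set w : n.-tuple bool | occ p w == k]|.

(* Run-length decomposition: the sizes of the maximal blocks of equal
   consecutive letters, in order. *)
Fixpoint run_sizes (w : seq bool) : seq nat :=
  match w with
  | [::] => [::]
  | a :: w' =>
      let rs := run_sizes w' in
      match w', rs with
      | b :: _, k :: ks => if a == b then k.+1 :: ks else 1 :: rs
      | _, _ => [:: 1]
      end
  end.

Definition nruns (p : seq bool) : nat := size (run_sizes p).
Definition runs_of_size (p : seq bool) (i : nat) : nat :=
  count (pred1 i) (run_sizes p).

Lemma run_sizes_test : run_sizes [:: true; true; false; true; true; true] = [:: 2; 1; 3].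
Proof. by []. Qed.

(* Write p = a :: q.  Prepending a letter c to a word w changes the number of
   occurrences of p by the number of occurrences of its tail q when c = a:
       c_p(c w) = c_p(w) + [c = a] c_q(w).
   Hence counting words by their first letter turns every count of the form
   "c_p(w) = i and c_q(w) = j" into a linear recurrence in the length n, and
   c_p(w) = 2 arises from c_p(w) = 2 (c <> a), or from (c_p, c_q)(w) = (0, 2)
   or (1, 1) (c = a), since c_q(w) = 0 forces c_p(w) = 0.

   It then develops the
   run statistics of p (r runs, length l) and a cut-off binomial, and solves
   the recurrences by induction on p and n, from the inside out:
     (c_p, c_q) = (0, 1):  C(n + 1 - r, l - r);
     (c_p, c_q) = (1, 1):  C(n - r, l - r) if p starts with two distinct
                           letters, 0 otherwise;
     (c_p, c_q) = (0, 2):  (number of size-1 runs but the first) * C(n - r, l - r);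
   and finally c_p = 2 by summing, with Pascal's rule, over the length. *)

From mathcomp Require Import all_boot zify.

Set Implicit Arguments. Unset Strict Implicit. Unset Printing Implicit Defensive.

Fixpoint nwords (n : nat) (P : pred (seq bool)) : nat :=
  if n is n'.+1 then nwords n' (fun w => P (true :: w)) + nwords n' (fun w => P (false :: w))
  else P [::].

Lemma eq_nwords n (P Q : pred (seq bool)) : P =1 Q -> nwords n P = nwords n Q.
Proof.
elim: n P Q => [|n IH] P Q PQ /=; first by rewrite PQ.
by congr (_ + _); apply: IH => w; apply: PQ.
Qed.

Lemma nwords_pred0 n : nwords n pred0 = 0.
Proof. by elim: n => //= n ->. Qed.

Lemma nwords_false n (P : pred (seq bool)) : (forall w, P w = false) -> nwords n P = 0.
Proof. by move=> P0; rewrite (eq_nwords _ P0) nwords_pred0. Qed.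

Lemma nwords_predU n (P Q : pred (seq bool)) : (forall w, ~~ (P w && Q w)) ->
  nwords n (fun w => P w || Q w) = nwords n P + nwords n Q.
Proof.
elim: n P Q => [|n IH] P Q PQ /=.
  by move: (PQ [::]); case: (P [::]); case: (Q [::]).
by rewrite IH // IH //; lia.
Qed.

Lemma nwords_split n P a : nwords n.+1 P =
  nwords n (fun w => P (a :: w)) + nwords n (fun w => P (~~ a :: w)).
Proof. by case: a => //=; rewrite addnC. Qed.

Lemma sum_tupleS n (F : n.+1.-tuple bool -> nat) :
  \sum_(t : n.+1.-tuple bool) F t =
  \sum_(t : n.-tuple bool) F [tuple of true :: t] +
  \sum_(t : n.-tuple bool) F [tuple of false :: t].
Proof.
rewrite (reindex (fun x : bool * n.-tuple bool => [tuple of x.1 :: x.2])) /=.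
  by rewrite -(pair_bigA _ (fun x (t : n.-tuple bool) => F [tuple of x :: t])) /= big_bool.
apply: onW_bij; exists (fun t => (thead t, [tuple of behead t])).
  by case=> x t; congr (_, _); apply: val_inj.
by move=> t /=; rewrite -tuple_eta.
Qed.

Lemma card_nwords n (P : pred (seq bool)) :
  #|[set t : n.-tuple bool | P t]| = nwords n P.
Proof.
have -> : #|[set t : n.-tuple bool | P t]| = \sum_(t : n.-tuple bool) P t.
  rewrite -sum1_card big_mkcond /=.
  by apply: eq_bigr => t _; rewrite inE; case: (P t).
elim: n P => [|n IH] P.
  by rewrite (big_pred1 [tuple]) // => t; apply/esym/eqP; exact: tuple0.
by rewrite sum_tupleS /= (IH (fun w => P (true :: w))) (IH (fun w => P (false :: w))).
Qed.

Fixpoint occn (p w : seq bool) : nat :=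
  if w is c :: w' then
    occn p w' + (if p is a :: q then (a == c) * occn q w' else 0)
  else (p == [::]).

(* The masks of c :: w selecting p split on whether they select c. *)
Lemma nwords_mask w p : nwords (size w) (fun m => mask m w == p) = occn p w.
Proof.
elim: w p => [|c w IH] p /=; first by case: p.
rewrite IH addnC; congr (_ + _).
case: p => [|a q]; first by rewrite nwords_false.
rewrite (@eq_nwords _ _ (fun m => (c == a) && (mask m w == q))); last first.
  by move=> m; rewrite eqseq_cons.
by case: (eqVneq c a) => _; rewrite ?mul1n -?IH // mul0n nwords_false.
Qed.

Lemma occ_occn p w : occ p w = occn p w.
Proof. by rewrite /occ (card_nwords (size w) (fun m => mask m w == p)) nwords_mask. Qed.

Lemma Bnp_nwords n p k : Bnp n p k = nwords n (fun w => occn p w == k).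
Proof.
rewrite /Bnp -(card_nwords n (fun w => occn p w == k)).
by apply: eq_card => w; rewrite !inE occ_occn.
Qed.

Lemma occn_nil w : occn [::] w = 1.
Proof. by elim: w => //= c w ->. Qed.

Lemma occn_tail0 a q w : occn q w = 0 -> occn (a :: q) w = 0.
Proof.
elim: w => [//|c w IH] /= q0.
have qw0 : occn q w = 0.
  by move: q0; case: q {IH} => [|b q] /=; rewrite ?occn_nil //; lia.
by rewrite IH // qw0 muln0.
Qed.

Lemma eqb_neg a : (a == ~~ a) = false. Proof. by case: a. Qed.
Lemma eq_negb a : (~~ a == a) = false. Proof. by case: a. Qed.

(* Closes an identity between boolean conditions on occurrence numbers of one
   word w after one step of the recursion of occn has been unfolded: it
   records occn_tail0 for every pattern occurring in the goal and finishes by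
   linear arithmetic. *)
Ltac tail_facts w :=
  repeat match goal with
  | |- context [occn (?a :: ?q) w] =>
      lazymatch goal with
      | _ : occn q w = 0 -> occn (a :: q) w = 0 |- _ => fail
      | _ => have := @occn_tail0 a q w; move=> ?
      end
  end.

Ltac occ_arith :=
  let w := fresh "w" in move=> w /=;
  rewrite ?negbK ?eqxx ?eqb_neg ?eq_negb ?mul1n ?mul0n ?addn0;
  tail_facts w; rewrite ?occn_nil;
  first [apply/negP => ?; lia | apply/negbTE/negP => ?; lia | apply/idP/idP => ?; lia].

Definition joint n p i j :=
  nwords n (fun w => (occn p w == i) && (occn (behead p) w == j)).

Definition joint011 n p := nwords n (fun w =>
  [&& occn p w == 0, occn (behead p) w == 1 & occn (behead (behead p)) w == 1]).

Lemma avoid_letter n a : nwords n (fun w => occn [:: a] w == 0) = 1.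
Proof.
elim: n => [|n IH] //; rewrite (nwords_split _ _ a) -[RHS]add0n -[in RHS]IH.
by congr (_ + _); [apply: nwords_false | apply: eq_nwords]; occ_arith.
Qed.

Lemma joint01_single n a : joint n [:: a] 0 1 = 1.
Proof. by rewrite -[RHS](avoid_letter n a); apply: eq_nwords => w /=; rewrite occn_nil andbT. Qed.

Lemma joint01_same n a q :
  joint n.+1 (a :: a :: q) 0 1 = joint n (a :: a :: q) 0 1 + joint n (a :: q) 0 1.
Proof. by rewrite /joint (nwords_split _ _ a) addnC; congr (_ + _); apply: eq_nwords; occ_arith. Qed.

Lemma joint01_flip n a q : joint n.+1 (a :: ~~ a :: q) 0 1 = joint n (~~ a :: q) 0 1.
Proof.
rewrite /joint (nwords_split _ _ a) -[RHS]add0n.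
by congr (_ + _); [apply: nwords_false | apply: eq_nwords]; occ_arith.
Qed.

Lemma joint11_single n a : joint n [:: a] 1 1 = n.
Proof.
elim: n => [|n IH] //; rewrite [LHS](nwords_split _ _ a).
transitivity (nwords n (fun w => occn [:: a] w == 0) + joint n [:: a] 1 1).
  by congr (_ + _); apply: eq_nwords; occ_arith.
by rewrite avoid_letter IH.
Qed.

Lemma joint11_same n a q : joint n.+1 (a :: a :: q) 1 1 = joint n (a :: a :: q) 1 1.
Proof.
rewrite /joint (nwords_split _ _ a) -[RHS]add0n.
by congr (_ + _); [apply: nwords_false | apply: eq_nwords]; occ_arith.
Qed.

Lemma joint11_flip n a q : joint n.+1 (a :: ~~ a :: q) 1 1 = joint n (a :: ~~ a :: q) 0 1.
Proof.
rewrite /joint (nwords_split _ _ a) -[RHS]addn0.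
by congr (_ + _); [apply: eq_nwords | apply: nwords_false]; occ_arith.
Qed.

Lemma joint011_pair n a : joint011 n.+1 [:: a; ~~ a] = 1.
Proof.
rewrite /joint011 (nwords_split _ _ a) -[RHS](avoid_letter n (~~ a)) -[RHS]add0n.
by congr (_ + _); [apply: nwords_false | apply: eq_nwords]; occ_arith.
Qed.

Lemma joint011_alt n a q : joint011 n.+1 (a :: ~~ a :: a :: q) = joint n (~~ a :: a :: q) 0 1.
Proof.
rewrite /joint011 /joint (nwords_split _ _ a) -[RHS]add0n.
by congr (_ + _); [apply: nwords_false | apply: eq_nwords]; occ_arith.
Qed.

Lemma joint011_same n a q : joint011 n.+1 (a :: ~~ a :: ~~ a :: q) = 0.
Proof. by rewrite /joint011 (nwords_split _ _ a) !nwords_false //; occ_arith. Qed.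

Lemma joint02_single n a : joint n [:: a] 0 2 = 0.
Proof. by apply: nwords_false => w; rewrite occn_nil andbF. Qed.

Lemma joint02_same n a q :
  joint n.+1 (a :: a :: q) 0 2 = joint n (a :: a :: q) 0 2 + joint n (a :: q) 0 2.
Proof. by rewrite /joint (nwords_split _ _ a) addnC; congr (_ + _); apply: eq_nwords; occ_arith. Qed.

(* The first letter must be ~~ a; the rest of the word then has
   (c_{~~a q}, c_q) = (0, 2), or (1, 1) while still avoiding p. *)
Lemma joint02_flip n a q :
  joint n.+1 (a :: ~~ a :: q) 0 2 = joint n (~~ a :: q) 0 2 + joint011 n (a :: ~~ a :: q).
Proof.
rewrite /joint /joint011 (nwords_split _ _ a) -[RHS]add0n -[in RHS]nwords_predU; last by occ_arith.
by congr (_ + _); [apply: nwords_false | apply: eq_nwords]; occ_arith.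
Qed.

Lemma exactly2_step n a q :
  nwords n.+1 (fun w => occn (a :: q) w == 2) =
  nwords n (fun w => occn (a :: q) w == 2) + (joint n (a :: q) 0 2 + joint n (a :: q) 1 1).
Proof.
rewrite /joint (nwords_split _ _ a) addnC -[in RHS]nwords_predU; last by occ_arith.
by congr (_ + _); apply: eq_nwords; occ_arith.
Qed.

Lemma run_sizes_cons_ne a q : exists k ks, run_sizes (a :: q) = k.+1 :: ks.
Proof.
case: q => [|d q]; first by exists 0, [::].
rewrite [run_sizes (a :: _)]/= -/(run_sizes (d :: q)).
case: (run_sizes (d :: q)) => [|k ks]; first by exists 0, [::].
by case: (a == d); do 2 eexists.
Qed.

Lemma run_sizes_cons a d q : run_sizes (a :: d :: q) =
  if a == d then (head 0 (run_sizes (d :: q))).+1 :: behead (run_sizes (d :: q))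
  else 1 :: run_sizes (d :: q).
Proof.
have [k [ks E]] := run_sizes_cons_ne d q.
by rewrite [run_sizes (a :: _)]/= -/(run_sizes (d :: q)) E.
Qed.

Lemma bool_cases (d a : bool) : d = a \/ d = ~~ a.
Proof. by case: d; case: a; auto. Qed.

Lemma nruns_same a q : nruns (a :: a :: q) = nruns (a :: q).
Proof.
by rewrite /nruns run_sizes_cons eqxx; have [k [ks ->]] := run_sizes_cons_ne a q.
Qed.

Lemma nruns_flip a q : nruns (a :: ~~ a :: q) = (nruns (~~ a :: q)).+1.
Proof. by rewrite /nruns run_sizes_cons eqb_neg. Qed.

Lemma nruns_pos a q : 0 < nruns (a :: q).
Proof. by have [k [ks E]] := run_sizes_cons_ne a q; rewrite /nruns E. Qed.

(* Each run contains at least one letter. *)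
Lemma nruns_le_size p : nruns p <= size p.
Proof.
elim: p => [|a [|d q] IH] //.
case: (bool_cases d a) IH => -> IH; [rewrite nruns_same | rewrite nruns_flip].
  by apply: (leq_trans IH).
by rewrite [size _]/= ltnS.
Qed.

Definition tail_r1 p := count (pred1 1) (behead (run_sizes p)).

Definition head_r1 p := head 0 (run_sizes p) == 1.

Lemma r1_split a q : count (pred1 1) (run_sizes (a :: q)) = head_r1 (a :: q) + tail_r1 (a :: q).
Proof. by rewrite /head_r1 /tail_r1; have [k [ks ->]] := run_sizes_cons_ne a q. Qed.

Lemma tail_r1_same a q : tail_r1 (a :: a :: q) = tail_r1 (a :: q).
Proof.
by rewrite /tail_r1 run_sizes_cons eqxx; have [k [ks ->]] := run_sizes_cons_ne a q.
Qed.

Lemma tail_r1_flip a q : tail_r1 (a :: ~~ a :: q) = count (pred1 1) (run_sizes (~~ a :: q)).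
Proof. by rewrite /tail_r1 run_sizes_cons eqb_neg. Qed.

Lemma head_r1_same a q : head_r1 (a :: a :: q) = false.
Proof.
by rewrite /head_r1 run_sizes_cons eqxx; have [k [ks ->]] := run_sizes_cons_ne a q.
Qed.

Lemma head_r1_flip a d q : a != d -> head_r1 (a :: d :: q).
Proof. by move=> ne_ad; rewrite /head_r1 run_sizes_cons (negbTE ne_ad). Qed.

(* 'C(m - r, j), set to 0 when r > m (where truncated subtraction would give
   'C(0, j) = 1 for j = 0). *)
Definition binr m r j := if r <= m then 'C(m - r, j) else 0.

Lemma binr_pascal m r j : binr m.+1 r j.+1 = binr m r j.+1 + binr m r j.
Proof.
rewrite /binr; case: (leqP r m) => h.
  by rewrite leqW // subSn // binS.
case: (leqP r m.+1) => // h2.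
by have -> : m.+1 - r = 0 by lia.
Qed.

Lemma binr_shift m r j : binr m.+1 r.+1 j = binr m r j.
Proof. by rewrite /binr ltnS subSS. Qed.

Lemma binr_small m r j : m < r -> binr m r j = 0.
Proof. by rewrite /binr; case: leqP => //; lia. Qed.

Lemma bin_subS n r j : 'C(n.+1 - r, j.+1) = 'C(n - r, j.+1) + binr n r j.
Proof.
rewrite /binr; case: leqP => h; first by rewrite subSn // binS.
have [-> ->] : n.+1 - r = 0 /\ n - r = 0 by lia.
by rewrite bin0n.
Qed.

Lemma joint01E a q n :
  joint n (a :: q) 0 1 = binr n.+1 (nruns (a :: q)) (size (a :: q) - nruns (a :: q)).
Proof.
elim: q a n => [|d q IH] a n; first by rewrite joint01_single /binr /= bin0.
have le_rl := nruns_le_size (a :: q); have r_pos := nruns_pos.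
case: (bool_cases d a) => ->; last first.
  rewrite nruns_flip; case: n => [|n]; last by rewrite joint01_flip IH binr_shift /= subSS.
  by rewrite binr_small //; move: (r_pos (~~ a) q); lia.
rewrite nruns_same; elim: n => [|n IHn].
  rewrite /binr; case: leqP => // _; rewrite bin_small //.
  by move: le_rl (r_pos a q) => /=; lia.
rewrite joint01_same IHn IH /=.
rewrite (_ : (size q).+2 - _ = ((size q).+1 - nruns (a :: q)).+1); last by move: le_rl => /=; lia.
by rewrite [RHS]binr_pascal.
Qed.

(* Only patterns a (~~a) (a ...) leave room for the third tail occurrence. *)
Lemma joint011E a q n : joint011 n (a :: ~~ a :: q) =
  head_r1 (~~ a :: q) *
  binr n.+1 (nruns (a :: ~~ a :: q)) (size (a :: ~~ a :: q) - nruns (a :: ~~ a :: q)).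
Proof.
case: n => [|n].
  by rewrite binr_small ?muln0 // nruns_flip; move: (nruns_pos (~~ a) q); lia.
case: q => [|e q]; first by rewrite joint011_pair nruns_flip /binr /= bin0.
case: (bool_cases e a) => ->; last by rewrite joint011_same head_r1_same.
by rewrite joint011_alt joint01E head_r1_flip ?eq_negb // mul1n nruns_flip binr_shift /= subSS.
Qed.

Lemma joint11_flipE a q n : joint n (a :: ~~ a :: q) 1 1 =
  binr n (nruns (a :: ~~ a :: q)) (size (a :: ~~ a :: q) - nruns (a :: ~~ a :: q)).
Proof.
case: n => [|n]; last by rewrite joint11_flip joint01E.
by rewrite binr_small //; move: (nruns_pos a (~~ a :: q)); lia.
Qed.

(* If p starts with a a, every occurrence of p yields two of its tail. *)
Lemma joint11_sameE a q n : joint n (a :: a :: q) 1 1 = 0.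
Proof. by elim: n => [|n IH] //; rewrite joint11_same. Qed.

Lemma joint02E a q n : joint n (a :: q) 0 2 =
  tail_r1 (a :: q) * binr n (nruns (a :: q)) (size (a :: q) - nruns (a :: q)).
Proof.
elim: q a n => [|d q IH] a n; first by rewrite joint02_single.
case: (bool_cases d a) => ->; last first.
  case: n => [|n]; last first.
    rewrite joint02_flip IH joint011E tail_r1_flip r1_split nruns_flip.
    by rewrite binr_shift /= subSS mulnDl addnC.
  by rewrite binr_small ?muln0 //; move: (nruns_pos a (~~ a :: q)); lia.
have le_rl := nruns_le_size (a :: q).
rewrite tail_r1_same nruns_same; elim: n => [|n IHn].
  by rewrite binr_small ?muln0 //; move: (nruns_pos a q); lia.
rewrite joint02_same IHn IH /=.
rewrite (_ : (size q).+2 - _ = ((size q).+1 - nruns (a :: q)).+1); last by move: le_rl => /=; lia.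
by rewrite [binr n.+1 _ _]binr_pascal mulnDr.
Qed.

Lemma exactly2E a d q n :
  nwords n (fun w => occn (a :: d :: q) w == 2) =
  count (pred1 1) (run_sizes (a :: d :: q)) *
  'C(n - nruns (a :: d :: q), size (a :: d :: q) - nruns (a :: d :: q) + 1).
Proof.
elim: n => [|n IHn]; first by rewrite sub0n addn1 bin0n muln0.
rewrite exactly2_step IHn joint02E r1_split !addn1 bin_subS.
case: (bool_cases d a) => ->.
  by rewrite joint11_sameE head_r1_same addn0 add0n mulnDr.
rewrite joint11_flipE head_r1_flip ?eqb_neg // /= mulnDr mulnDl mul1n; lia.
Qed.

(* The theorem for a single letter: two occurrences are two chosen positions. *)
Lemma exactly2_single a n : nwords n (fun w => occn [:: a] w == 2) = 'C(n, 2).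
Proof.
elim: n => [|n IH] //.
by rewrite exactly2_step IH joint02_single joint11_single binS bin1.
Qed.

Theorem mainTheorem3 (p : seq bool) (n : nat) :
  let l := size p in
  let r := nruns p in
  let r1 := runs_of_size p 1 in
  (2 <= l -> Bnp n p 2 = r1 * 'C(n - r, l - r + 1)) /\
  (l = 1 -> Bnp n p 2 = 'C(n, 2)).
Proof.
move=> l r r1; rewrite {}/l {}/r {}/r1 /runs_of_size Bnp_nwords.
by split; case: p => [|a [|d q]] //= _; rewrite ?exactly2E ?exactly2_single.
Qed.
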